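(* Let $f(z)=z+\sum_{k=2}^{\infty}a_kz^k$ be analytic in $\mathbb{D}=\{z:|z|<1\}$ with $zf'(z)-f(z)=\frac12 z^2\phi(z)$ for all $z\in\mathbb{D}$, where $\phi$ is analytic in $\mathbb{D}$ and $|\phi(z)|\le1$, and let $s_n(z;f)=z+\sum_{k=2}^n a_kz^k$. Then for each $r\in(0,1)$ and $n\ge2$, \[\left|\frac{s_n'(z;f)}{f'(z)}-1\right|\le |z|^n\left(\frac{n+1}{2n}+B_n\frac{|z|}{r-|z|}\right),\qquad |z|<r,\] where $B_n=\dfrac{\sqrt{2r-r^2}}{2(1-r)r^n}\bigl(n+1+\ln(n-1)+\gamma\bigr)$ and $\gamma\approx0.57722$ is the Euler–Mascheroni constant. *)

From Stdlib Require Import Reals.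
From Coquelicot Require Export Coquelicot.
Open Scope R_scope.

Definition harmonic (n : nat) : R := sum_f_R0 (fun k => / INR (S k)) (pred n).
Definition euler_gamma : R :=
  real (Lim_seq (fun n => harmonic n - ln (INR n))).

(* Derivative of the partial sum s_n(z;f) = sum_{k=0}^n a_k z^k
   (with a_0 = 0, a_1 = 1):  s_n'(z) = sum_{k=1}^n k a_k z^(k-1). *)
Fixpoint sn_deriv (a : nat -> C) (n : nat) (z : C) : C :=
  match n with
  | O => RtoC 0
  | S m => Cplus (sn_deriv a m z) (Cmult (RtoC (INR (S m))) (Cmult (a (S m)) (Cpow z m)))
  end.

Definition B_const (r : R) (n : nat) : R :=
  sqrt (2 * r - r ^ 2) / (2 * (1 - r) * r ^ n)
  * (INR n + 1 + ln (INR n - 1) + euler_gamma).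

From Stdlib Require Import Reals Lra Lia Psatz.
From Coquelicot Require Import Coquelicot.
Open Scope R_scope.

(* Write [z f' - f = sum_k (k - 1) a_k z^k = z^2 phi / 2].  Since [|phi| <= 1], Cauchy's
   estimate gives [|(k - 1) a_k| <= 1/2], so the tail [f' - s_n' = sum_(k >= n) (k + 1) a_(k+1) z^k]
   is at most [(n + 1)/(2n) |z|^n / (1 - |z|)].  On the other hand [(f(z)/z)' = phi/2], so
   [|f(z)/z - 1| <= |z|/2], [|f'(z) - 1| <= |z|] and [|f'(z)| >= 1 - |z|].  The quotient is
   therefore at most [(n + 1)/(2n) |z|^n / (1 - |z|)^2], and this is below the stated bound
   because [B_n >= (n + 1)/(2(1 - r))]. *)

(** * Series of complex numbers *)

Lemma pow_n_Cpow (w : C) (k : nat) : @pow_n C_AbsRing w k = (w ^ k)%C.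
Proof. induction k as [|k IH]; simpl; [reflexivity | now rewrite IH]. Qed.

Lemma is_pseries_C (b : nat -> C) (w l : C) :
  is_pseries b w l <-> is_series (fun k => w ^ k * b k)%C l.
Proof.
  unfold is_pseries.
  split; intros H; refine (is_series_ext _ _ _ _ H); intros k;
    [|symmetry]; rewrite pow_n_Cpow; reflexivity.
Qed.

(* [is_series_ext] with its premise stated in [C], where [ring] applies. *)
Lemma is_series_C_ext (u v : nat -> C) (l : C) :
  (forall k, @eq C (u k) (v k)) -> is_series u l -> is_series v l.
Proof. apply is_series_ext. Qed.

Lemma is_series_C_unique (u : nat -> C) (l l' : C) :
  is_series u l -> is_series u l' -> l = l'.
Proof. apply filterlim_locally_unique. Qed.

Lemma sum_n_Re (u : nat -> C) (n : nat) :
  sum_n (fun k => Re (u k)) n = Re (sum_n u n).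
Proof.
  induction n as [|n IH]; [now rewrite !sum_O|].
  now rewrite !sum_Sn, IH.
Qed.

Lemma is_series_Re (u : nat -> C) (l : C) :
  is_series u l -> is_series (fun k => Re (u k)) (Re l).
Proof.
  intros Hu. unfold is_series.
  apply (filterlim_ext (fun n => Re (sum_n u n))); [intros n; now rewrite sum_n_Re|].
  eapply filterlim_comp; [exact Hu|].
  intros P [eps HP]. exists eps. intros y Hy. apply HP. exact (proj1 Hy).
Qed.

Lemma Cmod_sum_n_le (u : nat -> C) (v : nat -> R) (n : nat) :
  (forall k, Cmod (u k) <= v k) -> Cmod (sum_n u n) <= sum_n v n.
Proof.
  intros Huv. induction n as [|n IH]; [rewrite !sum_O; apply Huv|].
  rewrite !sum_Sn. eapply Rle_trans; [apply Cmod_triangle|].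
  apply Rplus_le_compat; [exact IH | apply Huv].
Qed.

Lemma Cmod_series_le (u : nat -> C) (v : nat -> R) (l : C) (L : R) :
  is_series u l -> is_series v L -> (forall k, Cmod (u k) <= v k) -> Cmod l <= L.
Proof.
  intros Hu Hv Huv.
  assert (Hnorm : is_lim_seq (fun n => Cmod (sum_n u n)) (Cmod l)).
  { eapply filterlim_comp; [exact Hu | apply (filterlim_norm (V := C_NormedModule))]. }
  assert (Hv' : is_lim_seq (sum_n v) L) by exact Hv.
  refine (is_lim_seq_le _ _ _ _ _ Hnorm Hv'). intros n. now apply Cmod_sum_n_le.
Qed.

Lemma is_series_C_bounded_terms (u : nat -> C) (l : C) :
  is_series u l -> exists M, forall k, Cmod (u k) <= M.
Proof.
  intros Hu.
  destruct (filterlim_bounded (sum_n u) (ex_intro _ l Hu)) as [M HM].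
  change norm with Cmod in HM.
  exists (2 * M). intros [|k].
  - specialize (HM 0%nat). rewrite sum_O in HM.
    assert (0 <= Cmod (u 0%nat)) by apply Cmod_ge_0. lra.
  - assert (Hk : u (S k) = (sum_n u (S k) - sum_n u k)%C).
    { rewrite sum_Sn. change plus with Cplus. ring. }
    rewrite Hk. eapply Rle_trans; [apply Cmod_triangle|]. rewrite Cmod_opp.
    assert (H1 := HM (S k)). assert (H2 := HM k). lra.
Qed.

Lemma is_series_C_shift (u : nat -> C) (l : C) :
  u 0%nat = RtoC 0 -> is_series u l -> is_series (fun k => u (S k)) l.
Proof.
  intros H0 Hu. apply is_series_incr_1. rewrite H0. change plus with Cplus.
  now rewrite Cplus_0_r.
Qed.

Lemma is_series_C_unshift (u : nat -> C) (l : C) :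
  u 0%nat = RtoC 0 -> is_series (fun k => u (S k)) l -> is_series u l.
Proof.
  intros H0 Hu. apply is_series_decr_1. rewrite H0. change plus with Cplus.
  change opp with Copp. now replace (l + - 0)%C with l by ring.
Qed.

Lemma is_series_C_drop_zeros (N : nat) (u : nat -> C) (l : C) :
  (forall k, (k < N)%nat -> u k = RtoC 0) -> is_series u l ->
  is_series (fun k => u (N + k)%nat) l.
Proof.
  revert u. induction N as [|N IH]; intros u Hz Hu; [exact Hu|].
  apply (IH (fun k => u (S k))); [intros k Hk; apply Hz; lia|].
  apply is_series_C_shift; [apply Hz; lia | exact Hu].
Qed.

Lemma Cmod_series_le_geom_tail (N : nat) (u : nat -> C) (l : C) (K q : R) :
  0 <= q < 1 -> (forall k, (k < N)%nat -> u k = RtoC 0) ->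
  (forall k, Cmod (u k) <= K * q ^ k) -> is_series u l -> Cmod l <= K * q ^ N / (1 - q).
Proof.
  intros Hq Hz Hu Hl.
  apply (Cmod_series_le (fun k => u (N + k)%nat) (fun k => K * q ^ N * q ^ k));
    [now apply is_series_C_drop_zeros| |].
  - apply (is_series_scal_l (V := R_NormedModule) (K * q ^ N)), is_series_geom.
    rewrite Rabs_pos_eq; lra.
  - intros k. rewrite Rmult_assoc, <- pow_add. apply Hu.
Qed.

Lemma is_series_sum_n (u : nat -> nat -> C) (l : nat -> C) (N : nat) :
  (forall j, is_series (u j) (l j)) ->
  is_series (fun k => sum_n (fun j => u j k) N) (sum_n l N).
Proof.
  intros Hu. induction N as [|N IH].
  - rewrite sum_O. refine (is_series_ext _ _ _ _ (Hu 0%nat)). intros k. now rewrite sum_O.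
  - rewrite sum_Sn.
    refine (is_series_ext _ _ _ _ (is_series_plus _ _ _ _ IH (Hu (S N)))).
    intros k. now rewrite sum_Sn.
Qed.

Lemma ex_series_C_bounded_coef (b : nat -> C) (B : R) (w : C) :
  (forall k, Cmod (b k) <= B) -> Cmod w < 1 -> ex_series (fun k => w ^ k * b k)%C.
Proof.
  intros Hb Hw.
  apply (ex_series_le (V := C_CompleteNormedModule) _ (fun k => B * Cmod w ^ k)).
  - intros k. change norm with Cmod. rewrite Cmod_mult, Cmod_pow, Rmult_comm.
    apply Rmult_le_compat_r; [apply pow_le, Cmod_ge_0 | apply Hb].
  - apply (ex_series_scal_l (V := R_NormedModule)). exists (/ (1 - Cmod w)).
    apply is_series_geom. rewrite Rabs_pos_eq; [exact Hw | apply Cmod_ge_0].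
Qed.

Lemma pseries_coef_geom_bound (b : nat -> C) (rho : R) :
  0 <= rho < 1 -> (forall w, Cmod w < 1 -> ex_series (fun k => w ^ k * b k)%C) ->
  exists K q, 0 <= K /\ 0 <= q < 1 /\ forall k, Cmod (b k) * rho ^ k <= K * q ^ k.
Proof.
  intros Hrho Hb.
  set (r1 := (1 + rho) / 2).
  assert (Hr1 : Cmod (RtoC r1) = r1) by (rewrite Cmod_R; apply Rabs_pos_eq; unfold r1; lra).
  destruct (Hb (RtoC r1)) as [l Hl]; [rewrite Hr1; unfold r1; lra|].
  destruct (is_series_C_bounded_terms _ _ Hl) as [K HK].
  exists K, (rho / r1). split; [eapply Rle_trans; [apply Cmod_ge_0 | apply (HK 0%nat)]|].
  split; [split; [apply Rdiv_le_0_compat | apply Rlt_div_l]; unfold r1; lra|].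
  intros k. specialize (HK k). rewrite Cmod_mult, Cmod_pow, Hr1 in HK.
  replace (rho ^ k) with ((rho / r1) ^ k * r1 ^ k)
    by (rewrite <- Rpow_mult_distr; f_equal; unfold r1; field; lra).
  rewrite <- Rmult_assoc, (Rmult_comm _ ((rho / r1) ^ k)), Rmult_assoc, (Rmult_comm K).
  apply Rmult_le_compat_l; [apply pow_le, Rdiv_le_0_compat; unfold r1; lra | lra].
Qed.

Lemma CV_radius_ge_of_bounded (a : nat -> R) (r B : R) :
  0 <= r -> (forall k, Rabs (a k) * r ^ k <= B) -> Rbar_le r (CV_radius a).
Proof.
  intros Hr HB. apply (proj1 (CV_radius_bounded a)). exists B. intros k.
  rewrite Rabs_mult, (Rabs_pos_eq (r ^ k)) by (apply pow_le; lra). apply HB.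
Qed.

(** * Roots of unity *)

Definition cis (t : R) : C := (cos t, sin t).

Lemma cis_pow (t : R) (k : nat) : (cis t ^ k)%C = cis (INR k * t).
Proof.
  induction k as [|k IH].
  - unfold cis. simpl. now rewrite Rmult_0_l, cos_0, sin_0.
  - rewrite Cpow_S, IH, S_INR. unfold cis, Cmult. simpl.
    rewrite Rmult_plus_distr_r, Rmult_1_l, (Rplus_comm _ t), cos_plus, sin_plus.
    f_equal; ring.
Qed.

Lemma Cmod_cis (t : R) : Cmod (cis t) = 1.
Proof.
  unfold Cmod, cis. cbn [fst snd].
  replace (cos t ^ 2 + sin t ^ 2) with 1 by (rewrite <- (sin2_cos2 t); unfold Rsqr; ring).
  apply sqrt_1.
Qed.

Lemma cis_neq_1 (t : R) : 0 < t < 2 * PI -> cis t <> RtoC 1.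
Proof.
  intros Ht Heq. injection Heq as Hc Hs.
  destruct (Rtotal_order t PI) as [h|[h|h]].
  - assert (0 < sin t) by (apply sin_gt_0; lra). lra.
  - subst t. rewrite cos_PI in Hc. lra.
  - assert (sin t < 0) by (apply sin_lt_0; lra). lra.
Qed.

Definition root_of_unity (N : nat) : C := cis (2 * PI / INR (S N)).

Lemma Cmod_root_of_unity_pow (N j : nat) : Cmod (root_of_unity N ^ j) = 1.
Proof. unfold root_of_unity. now rewrite cis_pow, Cmod_cis. Qed.

Lemma root_of_unity_pow (N e : nat) :
  (root_of_unity N ^ e)%C = cis (INR (e mod S N) * (2 * PI / INR (S N))).
Proof.
  assert (HN : 0 < INR (S N)) by apply lt_0_INR, Nat.lt_0_succ.
  unfold root_of_unity. rewrite cis_pow, (Nat.div_mod_eq e (S N)) at 1.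
  rewrite plus_INR, mult_INR.
  replace ((INR (S N) * INR (e / S N) + INR (e mod S N)) * (2 * PI / INR (S N)))
    with (INR (e mod S N) * (2 * PI / INR (S N)) + 2 * INR (e / S N) * PI) by (field; lra).
  unfold cis. now rewrite cos_period, sin_period.
Qed.

Lemma sum_n_geom_C (q : C) (N : nat) :
  ((1 - q) * sum_n (fun j => q ^ j) N = 1 - q ^ S N)%C.
Proof.
  induction N as [|N IH].
  - rewrite sum_O. simpl. ring.
  - rewrite sum_Sn. change plus with Cplus.
    rewrite Cmult_plus_distr_l, IH. simpl. ring.
Qed.

Lemma sum_n_C_const_1 (N : nat) : sum_n (fun _ => RtoC 1) N = RtoC (INR (S N)).
Proof.
  induction N as [|N IH]; [now rewrite sum_O|].
  rewrite sum_Sn, IH, (S_INR (S N)), RtoC_plus. reflexivity.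
Qed.

Lemma sum_n_root_of_unity_pow (N e : nat) :
  sum_n (fun j => (root_of_unity N ^ e) ^ j)%C N
  = if Nat.eqb (e mod S N) 0 then RtoC (INR (S N)) else RtoC 0.
Proof.
  assert (HN : 0 < INR (S N)) by apply lt_0_INR, Nat.lt_0_succ.
  rewrite root_of_unity_pow.
  assert (Hs : (e mod S N < S N)%nat) by (apply Nat.mod_upper_bound; lia).
  destruct (Nat.eqb_spec (e mod S N) 0) as [Hs0|Hs0].
  - rewrite Hs0, Rmult_0_l.
    replace (cis 0) with (RtoC 1) by (unfold cis; now rewrite cos_0, sin_0).
    rewrite <- sum_n_C_const_1. apply sum_n_ext. intros j. apply Cpow_1_l.
  - set (t := INR (e mod S N) * (2 * PI / INR (S N))).
    assert (Hq1 : cis t <> RtoC 1).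
    { apply cis_neq_1. assert (0 < INR (e mod S N) < INR (S N)).
      { split; [apply lt_0_INR | apply lt_INR]; lia. }
      assert (0 < PI) by apply PI_RGT_0.
      unfold t. split.
      - apply Rmult_lt_0_compat; [lra | apply Rdiv_lt_0_compat; lra].
      - replace (2 * PI) with (INR (S N) * (2 * PI / INR (S N))) at 2 by (field; lra).
        apply Rmult_lt_compat_r; [apply Rdiv_lt_0_compat|]; lra. }
    assert (HqN : (cis t ^ S N)%C = RtoC 1).
    { unfold t. rewrite cis_pow.
      replace (INR (S N) * (INR (e mod S N) * (2 * PI / INR (S N))))
        with (0 + 2 * INR (e mod S N) * PI) by (field; lra).
      unfold cis. now rewrite cos_period, sin_period, cos_0, sin_0. }
    assert (Hne : (1 - cis t)%C <> RtoC 0).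
    { intros E. apply Hq1. replace (cis t) with (1 - (1 - cis t))%C by ring.
      rewrite E. ring. }
    assert (Hgeom := sum_n_geom_C (cis t) N). rewrite HqN in Hgeom.
    assert (Hsum : @eq C (sum_n (fun j => cis t ^ j)%C N) 0).
    { replace (sum_n _ N) with (/ (1 - cis t) * ((1 - cis t) * sum_n (fun j => cis t ^ j) N))%C
        by (field; exact Hne).
      rewrite Hgeom. ring. }
    exact Hsum.
Qed.

(** * Cauchy's coefficient estimate *)

Lemma le_of_le_plus_geom (x M K q : R) (m : nat) :
  0 <= q < 1 -> (forall N, (m <= N)%nat -> x <= M + K * q ^ N) -> x <= M.
Proof.
  intros Hq Hx.
  assert (Hlim : is_lim_seq (fun N => M + K * q ^ N) (M + K * 0)).
  { apply (is_lim_seq_plus' _ _ M (K * 0)); [apply is_lim_seq_const|].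
    apply (is_lim_seq_mult' (fun _ => K)); [apply is_lim_seq_const|].
    apply is_lim_seq_geom. rewrite Rabs_pos_eq; lra. }
  rewrite Rmult_0_r, Rplus_0_r in Hlim.
  exact (is_lim_seq_le_loc _ _ x M (ex_intro _ m Hx) (is_lim_seq_const x) Hlim).
Qed.

Lemma le_of_forall_pow_mul_le (x M : R) (m : nat) :
  (forall rho, 0 < rho < 1 -> rho ^ m * x <= M) -> x <= M.
Proof.
  intros Hx.
  set (rho := fun N => 1 - (1 / 2) ^ S N).
  assert (Hrho : forall N, 0 < rho N < 1).
  { intros N. assert (0 < (1 / 2) ^ S N) by (apply pow_lt; lra).
    assert ((1 / 2) ^ S N < 1) by (apply pow_lt_1_compat; [lra | lia]).
    unfold rho. lra. }
  assert (Hlim : is_lim_seq rho 1).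
  { replace (Finite 1) with (Rbar_minus 1 0) by (simpl; f_equal; ring).
    apply is_lim_seq_minus'; [apply is_lim_seq_const|].
    apply (is_lim_seq_incr_1 (fun N => (1 / 2) ^ N)), is_lim_seq_geom.
    rewrite Rabs_pos_eq; lra. }
  assert (Hpow : is_lim_seq (fun N => rho N ^ m * x) (1 ^ m * x)).
  { apply (is_lim_seq_mult' _ (fun _ => x)); [|apply is_lim_seq_const].
    apply (is_lim_seq_continuous (fun y => y ^ m)); [|exact Hlim].
    apply derivable_continuous_pt, derivable_pt_pow. }
  rewrite pow1, Rmult_1_l in Hpow.
  exact (is_lim_seq_le _ _ x M (fun N => Hx _ (Hrho N)) Hpow (is_lim_seq_const M)).
Qed.

(* The discrete Cauchy integral: the mean of [w^(-m) P(w)] over the points [w = rho * omega^j],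
   [omega] of order [S N], with [omega^(-m)] written [omega^(S N - m)]. *)
Definition root_average (P : C -> C) (rho : R) (m N : nat) : C :=
  (/ INR (S N) * sum_n (fun j => (root_of_unity N ^ j) ^ (S N - m)
                                  * P (RtoC rho * root_of_unity N ^ j)) N)%C.

Section CauchyEstimate.

Variables (b : nat -> C) (P : C -> C) (M : R).
Hypothesis hP : forall w, Cmod w < 1 -> is_series (fun k => w ^ k * b k)%C (P w).
Hypothesis hPM : forall w, Cmod w < 1 -> Cmod (P w) <= M.

Lemma Cmod_root_average_le (rho : R) (m N : nat) :
  0 <= rho < 1 -> Cmod (root_average P rho m N) <= M.
Proof.
  intros Hrho. unfold root_average.
  assert (HN : 0 < INR (S N)) by (apply lt_0_INR; lia).
  assert (HN0 : RtoC (INR (S N)) <> RtoC 0) by (intros E; apply RtoC_inj in E; lra).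
  rewrite Cmod_mult, Cmod_inv, Cmod_R, Rabs_pos_eq by (exact HN0 || lra).
  apply (Rmult_le_reg_l (INR (S N))); [exact HN|].
  rewrite <- Rmult_assoc, Rinv_r, Rmult_1_l by lra. rewrite <- sum_n_const.
  apply Cmod_sum_n_le. intros j.
  rewrite Cmod_mult, Cmod_pow, Cmod_root_of_unity_pow, pow1, Rmult_1_l.
  apply hPM. rewrite Cmod_mult, Cmod_root_of_unity_pow, Cmod_R, Rabs_pos_eq; lra.
Qed.

(* Averaging over the roots of unity keeps exactly the terms of index [k = m (mod S N)]. *)
Lemma is_series_root_average (rho : R) (m N : nat) :
  0 <= rho < 1 ->
  is_series (fun k => if Nat.eqb ((S N - m + k) mod S N) 0 then (RtoC rho ^ k * b k)%C
                      else RtoC 0)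
    (root_average P rho m N).
Proof.
  intros Hrho. unfold root_average.
  assert (HN : INR (S N) <> 0) by (apply not_0_INR; lia).
  apply (is_series_C_ext (fun k => / INR (S N) * (RtoC rho ^ k * b k
                   * sum_n (fun j => (root_of_unity N ^ (S N - m + k)) ^ j) N))%C).
  { intros k. rewrite sum_n_root_of_unity_pow.
    destruct (Nat.eqb _ 0); [field; intros E; apply HN; now injection E | ring]. }
  apply (is_series_scal_l (V := C_NormedModule)).
  apply (is_series_C_ext
           (fun k => sum_n (fun j => (root_of_unity N ^ j) ^ (S N - m)
                                     * ((RtoC rho * root_of_unity N ^ j) ^ k * b k)) N)%C).
  { intros k. rewrite <- (sum_n_mult_l (K := C_Ring)). apply sum_n_ext. intros j.
    change mult with Cmult.
    rewrite Cpow_mult_l, <- !Cpow_mult_r, (Nat.mul_comm (S N - m + k)), Nat.mul_add_distr_l,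
      Cpow_add_r, !Cpow_mult_r.
    match goal with |- ?x = ?y => change (@eq C x y) end. ring. }
  apply is_series_sum_n. intros j.
  apply (is_series_scal_l (V := C_NormedModule)), hP.
  rewrite Cmod_mult, Cmod_root_of_unity_pow, Cmod_R, Rabs_pos_eq; lra.
Qed.

Lemma Cmod_root_average_sub_le (rho K q : R) (m N : nat) :
  0 <= rho < 1 -> (m <= N)%nat -> 0 <= K -> 0 <= q < 1 ->
  (forall k, Cmod (b k) * rho ^ k <= K * q ^ k) ->
  Cmod (root_average P rho m N - RtoC rho ^ m * b m)%C <= K * q ^ N / (1 - q).
Proof.
  intros Hrho HmN HK0 Hq HK.
  set (c := fun k => if Nat.eqb ((S N - m + k) mod S N) 0 then (RtoC rho ^ k * b k)%C
                     else RtoC 0).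
  assert (Hcm : c m = (RtoC rho ^ m * b m)%C).
  { unfold c. now replace (S N - m + m)%nat with (S N) by lia; rewrite Nat.Div0.mod_same. }
  rewrite <- Hcm.
  apply (Cmod_series_le_geom_tail N (fun k => c (m + S k)%nat) _ K q Hq).
  - intros k Hk. unfold c.
    now rewrite <- (Nat.mod_unique (S N - m + (m + S k)) (S N) 1 (S k)) by lia.
  - intros k. unfold c. destruct (Nat.eqb _ 0).
    + rewrite Cmod_mult, Cmod_pow, Cmod_R, Rabs_pos_eq, Rmult_comm by lra.
      eapply Rle_trans; [apply HK|]. apply Rmult_le_compat_l; [exact HK0|].
      replace (m + S k)%nat with (S m + k)%nat by lia. rewrite pow_add.
      assert (0 <= q ^ S m < 1) by (apply pow_lt_1_compat; [lra | lia]).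
      assert (0 <= q ^ k) by (apply pow_le; lra). nra.
    + rewrite Cmod_0. apply Rmult_le_pos; [exact HK0 | apply pow_le; lra].
  - apply (is_series_incr_1 (fun k => c (m + k)%nat)). rewrite Nat.add_0_r.
    change plus with Cplus. replace (root_average P rho m N - c m + c m)%C
      with (root_average P rho m N) by ring.
    apply (is_series_C_drop_zeros m c); [|now apply is_series_root_average].
    intros k Hk. unfold c. rewrite Nat.mod_small by lia.
    destruct (Nat.eqb_spec (S N - m + k) 0); [lia | reflexivity].
Qed.

Lemma pow_mul_Cmod_pseries_coef_le (rho : R) (m : nat) :
  0 < rho < 1 -> rho ^ m * Cmod (b m) <= M.
Proof.
  intros Hrho.
  destruct (pseries_coef_geom_bound b rho) as [K [q [HK0 [Hq HK]]]];
    [lra | intros w Hw; eexists; now apply hP|].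
  apply (le_of_le_plus_geom _ _ (K / (1 - q)) q m Hq). intros N HmN.
  assert (HA := Cmod_root_average_le rho m N ltac:(lra)).
  assert (Hsub := Cmod_root_average_sub_le rho K q m N ltac:(lra) HmN HK0 Hq HK).
  replace (rho ^ m * Cmod (b m)) with (Cmod (RtoC rho ^ m * b m)%C)
    by (rewrite Cmod_mult, Cmod_pow, Cmod_R, Rabs_pos_eq by lra; reflexivity).
  set (A := root_average P rho m N) in *.
  replace (RtoC rho ^ m * b m)%C with (A - (A - RtoC rho ^ m * b m))%C by ring.
  eapply Rle_trans; [apply Cmod_triangle|]. rewrite Cmod_opp.
  unfold Rdiv in *. lra.
Qed.

Lemma Cmod_pseries_coef_le (m : nat) : Cmod (b m) <= M.
Proof.
  apply (le_of_forall_pow_mul_le _ _ m). intros rho Hrho.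
  now apply pow_mul_Cmod_pseries_coef_le.
Qed.

End CauchyEstimate.

(** * Differentiation of complex power series *)

Lemma ex_series_sq_geom (q : R) : 0 <= q < 1 -> ex_series (fun k => INR (S k) ^ 2 * q ^ k).
Proof.
  intros Hq.
  set (a := PS_derive (PS_derive (fun _ => 1))).
  assert (Hrad : Rbar_lt (Rabs q) (CV_radius a)).
  { unfold a. rewrite !CV_radius_derive, Rabs_pos_eq by lra.
    apply (Rbar_lt_le_trans _ 1); [exact (proj2 Hq)|].
    apply (CV_radius_ge_of_bounded _ 1 1); [lra|]. intros k. rewrite Rabs_R1, pow1. lra. }
  apply (ex_series_le (V := R_CompleteNormedModule) _ (fun k => a k * q ^ k)).
  - intros k. change norm with Rabs.
    rewrite Rabs_pos_eq by (apply Rmult_le_pos; [apply pow_le, pos_INR | apply pow_le; lra]).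
    apply Rmult_le_compat_r; [apply pow_le; lra|].
    unfold a, PS_derive. rewrite Rmult_1_r, (S_INR (S k)).
    assert (0 <= INR (S k)) by apply pos_INR. nra.
  - apply ex_pseries_R, CV_radius_inside, Hrad.
Qed.

Lemma Cmod_pow_succ_taylor_le (z h : C) (rho : R) (k : nat) :
  Cmod z <= rho -> Cmod (z + h) <= rho ->
  rho * Cmod ((z + h) ^ S k - z ^ S k - INR (S k) * h * z ^ k)%C
  <= INR (S k) ^ 2 * Cmod h ^ 2 * rho ^ k.
Proof.
  intros Hz Hzh. assert (Hh := Cmod_ge_0 h).
  assert (Hrho : 0 <= rho) by (eapply Rle_trans; [apply Cmod_ge_0 | exact Hz]).
  induction k as [|k IH].
  - replace ((z + h) ^ 1 - z ^ 1 - INR 1 * h * z ^ 0)%C with (RtoC 0) by (simpl; ring).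
    rewrite Cmod_0. simpl. nra.
  - set (E := ((z + h) ^ S k - z ^ S k - INR (S k) * h * z ^ k)%C) in IH.
    replace ((z + h) ^ S (S k) - z ^ S (S k) - INR (S (S k)) * h * z ^ S k)%C
      with ((z + h) * E + INR (S k) * (h * h) * z ^ k)%C
      by (unfold E; rewrite (S_INR (S k)), RtoC_plus; simpl; ring).
    assert (HE := Cmod_ge_0 E).
    assert (Hzk : Cmod z ^ k <= rho ^ k) by (apply pow_incr; split; [apply Cmod_ge_0 | exact Hz]).
    assert (Hrk : 0 <= rho ^ k) by (apply pow_le, Hrho).
    assert (Hk := pos_INR (S k)).
    apply (Rle_trans _ (rho * (Cmod (z + h) * Cmod E + INR (S k) * (Cmod h ^ 2 * Cmod z ^ k)))).
    { apply Rmult_le_compat_l; [exact Hrho|].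
      eapply Rle_trans; [apply Cmod_triangle|].
      rewrite !Cmod_mult, Cmod_R, Rabs_pos_eq, Cmod_pow by exact Hk.
      rewrite Rmult_assoc, <- Rsqr_pow2. unfold Rsqr. lra. }
    assert (HY : rho * (Cmod (z + h) * Cmod E) <= rho * (INR (S k) ^ 2 * Cmod h ^ 2 * rho ^ k)).
    { rewrite <- Rmult_assoc, (Rmult_comm rho), Rmult_assoc.
      apply Rmult_le_compat; [apply Cmod_ge_0 | nra | exact Hzh | exact IH]. }
    assert (HZ : rho * (INR (S k) * (Cmod h ^ 2 * Cmod z ^ k))
                 <= rho * (INR (S k) * (Cmod h ^ 2 * rho ^ k))).
    { apply Rmult_le_compat_l; [exact Hrho|]. apply Rmult_le_compat_l; [exact Hk|].
      apply Rmult_le_compat_l; [nra | exact Hzk]. }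
    change (rho ^ S k) with (rho * rho ^ k). rewrite (S_INR (S k)).
    assert (0 <= Cmod h ^ 2 * rho ^ k) by (apply Rmult_le_pos; nra).
    assert (0 <= INR (S k) * (rho * (Cmod h ^ 2 * rho ^ k))) by (apply Rmult_le_pos; nra).
    nra.
Qed.

Lemma is_derive_C_of_quadratic_bound (F : C -> C) (z D : C) (K delta : R) :
  0 < delta ->
  (forall h, Cmod h < delta -> Cmod (F (z + h) - F z - h * D)%C <= K * Cmod h ^ 2) ->
  is_derive F z D.
Proof.
  intros Hdelta HF. split; [apply is_linear_scal_l|].
  intros x Hx eps.
  apply (is_filter_lim_locally_unique (V := AbsRing_NormedModule C_AbsRing)) in Hx. subst x.
  assert (HK : 0 < Rabs K + 1) by (assert (0 <= Rabs K) by apply Rabs_pos; lra).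
  assert (Hr : 0 < Rmin delta (eps / (Rabs K + 1))).
  { apply Rmin_pos; [exact Hdelta | apply Rdiv_lt_0_compat; [apply cond_pos | exact HK]]. }
  exists (mkposreal _ Hr). intros y Hy.
  change (Cmod (y - z)%C < Rmin delta (eps / (Rabs K + 1))) in Hy.
  change (Cmod (F y - F z - (y - z) * D)%C <= eps * Cmod (y - z)%C).
  set (h := (y - z)%C) in *. replace y with (z + h)%C by (unfold h; ring).
  assert (Hh := Cmod_ge_0 h).
  assert (Hhd : Cmod h < delta) by (eapply Rlt_le_trans; [exact Hy | apply Rmin_l]).
  assert (Hhe : Cmod h * (Rabs K + 1) <= eps).
  { apply Rle_div_r; [exact HK|]. eapply Rle_trans; [apply Rlt_le, Hy | apply Rmin_r]. }
  eapply Rle_trans; [exact (HF h Hhd)|].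
  assert (K <= Rabs K) by apply Rle_abs. nra.
Qed.

Section PowerSeriesDerivative.

Variables (b : nat -> C) (F : C -> C).
Hypothesis hF : forall w, Cmod w < 1 -> is_series (fun k => w ^ k * b k)%C (F w).

Lemma pseries_coef_succ_geom_bound (rho : R) :
  0 <= rho < 1 ->
  exists K q, 0 <= K /\ 0 <= q < 1 /\ forall k, rho * (Cmod (b (S k)) * rho ^ k) <= K * q ^ k.
Proof.
  intros Hrho.
  destruct (pseries_coef_geom_bound b rho) as [K [q [HK0 [Hq HK]]]];
    [exact Hrho | intros w Hw; eexists; now apply hF|].
  exists K, q. do 2 (split; [assumption|]). intros k.
  apply (Rle_trans _ (K * q ^ S k)).
  - eapply Rle_trans; [|apply (HK (S k))]. simpl. right. ring.
  - simpl. assert (0 <= K * q ^ k) by (apply Rmult_le_pos; [exact HK0 | apply pow_le; lra]).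
    nra.
Qed.

Lemma ex_series_pseries_derive_C (z : C) :
  Cmod z < 1 -> ex_series (fun k => z ^ k * (INR (S k) * b (S k)))%C.
Proof.
  intros Hz. assert (Hz0 := Cmod_ge_0 z).
  set (rho := (1 + Cmod z) / 2).
  destruct (pseries_coef_succ_geom_bound rho) as [K [q [HK0 [Hq Hcoef]]]]; [unfold rho; lra|].
  apply (ex_series_le (V := C_CompleteNormedModule) _
           (fun k => K / rho * (INR (S k) ^ 2 * q ^ k))).
  - intros k. change norm with Cmod.
    rewrite !Cmod_mult, Cmod_pow, Cmod_R, Rabs_pos_eq by apply pos_INR.
    assert (Hk : 1 <= INR (S k)) by (rewrite S_INR; assert (0 <= INR k) by apply pos_INR; lra).
    assert (Hzk : Cmod z ^ k <= rho ^ k) by (apply pow_incr; unfold rho; lra).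
    assert (Hb := Cmod_ge_0 (b (S k))).
    assert (0 <= K * q ^ k) by (apply Rmult_le_pos; [exact HK0 | apply pow_le; lra]).
    specialize (Hcoef k).
    apply (Rmult_le_reg_l rho); [unfold rho; lra|].
    replace (rho * (K / rho * (INR (S k) ^ 2 * q ^ k)))
      with (INR (S k) * (INR (S k) * (K * q ^ k))) by (field; unfold rho; lra).
    replace (rho * (Cmod z ^ k * (INR (S k) * Cmod (b (S k)))))
      with (INR (S k) * (rho * (Cmod (b (S k)) * Cmod z ^ k))) by ring.
    apply Rmult_le_compat_l; [lra|].
    assert (rho * (Cmod (b (S k)) * Cmod z ^ k) <= rho * (Cmod (b (S k)) * rho ^ k)).
    { apply Rmult_le_compat_l; [unfold rho; lra|]. apply Rmult_le_compat_l; assumption. }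
    nra.
  - destruct (ex_series_sq_geom q Hq) as [Ssq HS].
    exists (K / rho * Ssq). now apply (is_series_scal_l (V := R_NormedModule)).
Qed.

Lemma Cmod_pseries_taylor_rem_le (z D : C) :
  Cmod z < 1 -> is_series (fun k => z ^ k * (INR (S k) * b (S k)))%C D ->
  exists K delta, 0 < delta /\
    forall h, Cmod h < delta -> Cmod (F (z + h) - F z - h * D)%C <= K * Cmod h ^ 2.
Proof.
  intros Hz HD. assert (Hz0 := Cmod_ge_0 z).
  set (rho := (1 + Cmod z) / 2).
  assert (Hrho : Cmod z < rho < 1) by (unfold rho; lra).
  destruct (pseries_coef_succ_geom_bound rho) as [K [q [HK0 [Hq Hcoef]]]]; [lra|].
  destruct (ex_series_sq_geom q Hq) as [Ssq HS].
  exists (K / rho ^ 2 * Ssq), (rho - Cmod z). split; [lra|]. intros h Hh.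
  assert (Hzh : Cmod (z + h) <= rho) by (eapply Rle_trans; [apply Cmod_triangle | lra]).
  assert (Hrem : is_series
            (fun k => b (S k) * ((z + h) ^ S k - z ^ S k - INR (S k) * h * z ^ k))%C
            (F (z + h) - F z - h * D)%C).
  { assert (Hsub := is_series_minus _ _ _ _ (hF (z + h) ltac:(lra)) (hF z Hz)).
    apply is_series_C_shift in Hsub;
      [|change plus with Cplus; change opp with Copp; simpl; ring].
    refine (is_series_C_ext _ _ _ _ (is_series_minus _ _ _ _ Hsub
                                      (is_series_scal_l (V := C_NormedModule) h _ _ HD))).
    intros k. change plus with Cplus. change opp with Copp. change scal with Cmult. ring. }
  apply (Cmod_series_le _ (fun k => Cmod h ^ 2 * (K / rho ^ 2) * (INR (S k) ^ 2 * q ^ k))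
           _ _ Hrem).
  - replace (K / rho ^ 2 * Ssq * Cmod h ^ 2) with (Cmod h ^ 2 * (K / rho ^ 2) * Ssq) by ring.
    now apply (is_series_scal_l (V := R_NormedModule)).
  - intros k. rewrite Cmod_mult.
    set (E := ((z + h) ^ S k - z ^ S k - INR (S k) * h * z ^ k)%C).
    assert (HE := Cmod_pow_succ_taylor_le z h rho k ltac:(lra) Hzh). fold E in HE.
    assert (Hb := Cmod_ge_0 (b (S k))).
    apply (Rmult_le_reg_l (rho ^ 2)); [apply pow_lt; lra|].
    replace (rho ^ 2 * (Cmod h ^ 2 * (K / rho ^ 2) * (INR (S k) ^ 2 * q ^ k)))
      with (INR (S k) ^ 2 * Cmod h ^ 2 * (K * q ^ k)) by (field; lra).
    apply (Rle_trans _ (Cmod (b (S k)) * rho * (INR (S k) ^ 2 * Cmod h ^ 2 * rho ^ k))).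
    + replace (rho ^ 2 * (Cmod (b (S k)) * Cmod E))
        with (Cmod (b (S k)) * rho * (rho * Cmod E)) by ring.
      apply Rmult_le_compat_l; [nra | exact HE].
    + replace (Cmod (b (S k)) * rho * (INR (S k) ^ 2 * Cmod h ^ 2 * rho ^ k))
        with (INR (S k) ^ 2 * Cmod h ^ 2 * (rho * (Cmod (b (S k)) * rho ^ k))) by ring.
      apply Rmult_le_compat_l; [apply Rmult_le_pos; apply pow2_ge_0 | apply Hcoef].
Qed.

Lemma is_derive_pseries_C (z : C) :
  Cmod z < 1 ->
  exists D, is_series (fun k => z ^ k * (INR (S k) * b (S k)))%C D /\ is_derive F z D.
Proof.
  intros Hz. destruct (ex_series_pseries_derive_C z Hz) as [D HD].
  exists D. split; [exact HD|].
  destruct (Cmod_pseries_taylor_rem_le z D Hz HD) as [K [delta [Hdelta Hrem]]].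
  exact (is_derive_C_of_quadratic_bound F z D K delta Hdelta Hrem).
Qed.

End PowerSeriesDerivative.

(** * A mean value inequality along rays *)

Lemma exists_rotation_to_Cmod (v : C) : exists u, Cmod u = 1 /\ Re (u * v)%C = Cmod v.
Proof.
  destruct (Ceq_dec v 0) as [->|Hv].
  - exists (RtoC 1). rewrite Cmod_1, Cmod_0, Cmult_0_r. split; reflexivity.
  - assert (Hv' : 0 < Cmod v) by now apply Cmod_gt_0.
    exists (RtoC (/ Cmod v) * Cconj v)%C. split.
    + rewrite Cmod_mult, Cmod_conj, Cmod_R, Rabs_pos_eq by (apply Rlt_le, Rinv_0_lt_compat, Hv').
      field. lra.
    + rewrite <- Cmult_assoc, (Cmult_comm (Cconj v)), <- Cmod2_conj, <- RtoC_mult.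
      simpl. field. lra.
Qed.

Lemma PSeries_Re_ray (c : nat -> C) (u z S : C) (t : R) :
  is_series (fun k => (RtoC t * z) ^ k * c k)%C S ->
  PSeries (fun k => Re (u * (z ^ k * c k))%C) t = Re (u * S)%C.
Proof.
  intros HS. apply is_pseries_unique, is_pseries_R.
  refine (is_series_ext _ _ _ _
            (is_series_Re _ _ (is_series_scal_l (V := C_NormedModule) u _ _ HS))).
  intros k. change scal with Cmult. cbv beta.
  rewrite Cpow_mult_l, <- RtoC_pow, Rmult_comm, <- re_scal_l. f_equal. ring.
Qed.

Lemma CV_radius_Re_ray_gt_1 (c : nat -> C) (B : R) (u z : C) :
  Cmod u = 1 -> Cmod z < 1 -> (forall k, Cmod (c k) <= B) ->
  Rbar_lt 1 (CV_radius (fun k => Re (u * (z ^ k * c k))%C)).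
Proof.
  intros Hu Hz HB. assert (Hz0 := Cmod_ge_0 z).
  set (r := 2 / (1 + Cmod z)).
  assert (Hr1 : 1 < r) by (unfold r; apply Rlt_div_r; lra).
  assert (Hrz : 0 <= r * Cmod z <= 1).
  { unfold r. split; [apply Rmult_le_pos; [apply Rdiv_le_0_compat|]; lra|].
    replace (2 / (1 + Cmod z) * Cmod z) with (2 * Cmod z / (1 + Cmod z)) by (field; lra).
    apply Rle_div_l; lra. }
  apply (Rbar_lt_le_trans _ r); [exact Hr1|].
  apply (CV_radius_ge_of_bounded _ r B); [lra|]. intros k.
  eapply Rle_trans; [apply Rmult_le_compat_r; [apply pow_le; lra | apply re_le_Cmod]|].
  rewrite !Cmod_mult, Hu, Cmod_pow, Rmult_1_l, Rmult_comm, <- Rmult_assoc, <- Rpow_mult_distr.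
  assert ((r * Cmod z) ^ k <= 1) by (rewrite <- (pow1 k); apply pow_incr; lra).
  assert (0 <= (r * Cmod z) ^ k) by (apply pow_le; lra).
  assert (Hc := Cmod_ge_0 (c k)). specialize (HB k). nra.
Qed.

(* Rotate [Sz - c 0] onto the positive axis, then apply the real mean value theorem to the
   real part of [t |-> S(t z)], whose derivative is [z D(t z)]. *)
Lemma Cmod_pseries_sub_coef0_le (c : nat -> C) (B L : R) (z Sz : C) :
  (forall k, Cmod (c k) <= B) ->
  (forall w, Cmod w < 1 -> exists Dw,
     is_series (fun k => w ^ k * (INR (S k) * c (S k)))%C Dw /\ Cmod Dw <= L) ->
  Cmod z < 1 -> is_series (fun k => z ^ k * c k)%C Sz ->
  Cmod (Sz - c 0%nat)%C <= L * Cmod z.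
Proof.
  intros HB HD Hz HSz. assert (Hz0 := Cmod_ge_0 z).
  destruct (exists_rotation_to_Cmod (Sz - c 0%nat)%C) as [u [Hu Huv]]. rewrite <- Huv.
  set (alpha := fun k => Re (u * (z ^ k * c k))%C).
  assert (Hrad : forall t, 0 <= t <= 1 -> Rbar_lt (Rabs t) (CV_radius alpha)).
  { intros t Ht. rewrite Rabs_pos_eq by lra.
    apply (Rbar_le_lt_trans _ 1); [simpl; lra|]. now apply (CV_radius_Re_ray_gt_1 _ B). }
  destruct (MVT_gen (PSeries alpha) 0 1 (PSeries (PS_derive alpha))) as [t [Ht Hmvt]].
  { rewrite Rmin_left, Rmax_right by lra. intros t Ht. apply is_derive_PSeries, Hrad. lra. }
  { rewrite Rmin_left, Rmax_right by lra. intros t Ht. apply PSeries_continuity, Hrad. lra. }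
  rewrite Rmin_left, Rmax_right in Ht by lra.
  assert (Hw : Cmod (RtoC t * z)%C < 1) by (rewrite Cmod_mult, Cmod_R, Rabs_pos_eq; nra).
  destruct (HD _ Hw) as [Dw [HDw HDwL]].
  assert (Halpha' : PSeries (PS_derive alpha) t = Re (u * z * Dw)%C).
  { rewrite <- (PSeries_Re_ray _ (u * z) z Dw t HDw). apply PSeries_ext. intros k.
    unfold PS_derive, alpha. rewrite <- re_scal_l. f_equal. simpl. ring. }
  assert (Halpha1 : PSeries alpha 1 = Re (u * Sz)%C).
  { apply PSeries_Re_ray. refine (is_series_C_ext _ _ _ _ HSz). intros k. f_equal. f_equal. ring. }
  assert (Halpha0 : PSeries alpha 0 = Re (u * c 0%nat)%C).
  { rewrite PSeries_0. unfold alpha. f_equal. simpl. ring. }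
  replace (u * (Sz - c 0%nat))%C with (u * Sz + - (u * c 0%nat))%C by ring.
  rewrite re_plus, re_opp, <- Halpha1, <- Halpha0.
  unfold Rminus in Hmvt. rewrite Hmvt, Halpha', Ropp_0, Rplus_0_r, Rmult_1_r.
  eapply Rle_trans; [apply Rle_abs|]. eapply Rle_trans; [apply re_le_Cmod|].
  rewrite !Cmod_mult, Hu, Rmult_1_l, Rmult_comm.
  apply Rmult_le_compat_r; [exact Hz0 | exact HDwL].
Qed.

(** * Estimates for [f] *)

Lemma sum_n_sn_deriv (a : nat -> C) (z : C) (m : nat) :
  @eq C (sum_n (fun k => z ^ k * (INR (S k) * a (S k)))%C m) (sn_deriv a (S m) z).
Proof.
  induction m as [|m IH].
  - rewrite sum_O. simpl. ring.
  - rewrite sum_Sn. change plus with Cplus. rewrite IH.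
    change (sn_deriv a (S (S m)) z)
      with (sn_deriv a (S m) z + INR (S (S m)) * (a (S (S m)) * z ^ S m))%C.
    ring.
Qed.

Section FunctionClass.

Variables (a : nat -> C) (f fp phi : C -> C).
Hypothesis ha0 : a 0%nat = RtoC 0.
Hypothesis ha1 : a 1%nat = RtoC 1.
Hypothesis hf : forall z, Cmod z < 1 -> is_series (fun k => z ^ k * a k)%C (f z).
Hypothesis hfp : forall z, Cmod z < 1 -> is_derive f z (fp z).
Hypothesis hphi : forall z, Cmod z < 1 -> Cmod (phi z) <= 1.
Hypothesis heq : forall z, Cmod z < 1 -> (z * fp z - f z = RtoC (/ 2) * (z ^ 2 * phi z))%C.

Lemma is_series_fp (z : C) :
  Cmod z < 1 -> is_series (fun k => z ^ k * (INR (S k) * a (S k)))%C (fp z).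
Proof.
  intros Hz. destruct (is_derive_pseries_C a f hf z Hz) as [D [HD Hder]].
  replace (fp z) with D; [exact HD|].
  rewrite <- (is_C_derive_unique _ _ _ Hder). exact (is_C_derive_unique _ _ _ (hfp z Hz)).
Qed.

Lemma is_series_zfp_sub_f (z : C) :
  Cmod z < 1 -> is_series (fun k => z ^ k * (RtoC (INR k - 1) * a k))%C (z * fp z - f z)%C.
Proof.
  intros Hz.
  assert (Hzfp : is_series (fun k => z ^ k * (INR k * a k))%C (z * fp z)%C).
  { apply is_series_C_unshift; [simpl; ring|].
    refine (is_series_C_ext _ _ _ _
              (is_series_scal_l (V := C_NormedModule) z _ _ (is_series_fp z Hz))).
    intros k. change scal with Cmult. simpl. ring. }
  refine (is_series_C_ext _ _ _ _ (is_series_minus _ _ _ _ Hzfp (hf z Hz))).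
  intros k. change plus with Cplus. change opp with Copp. rewrite RtoC_minus. ring.
Qed.

Lemma Cmod_pred_mul_coef_le (k : nat) : Cmod (RtoC (INR k - 1) * a k)%C <= / 2.
Proof.
  apply (Cmod_pseries_coef_le (fun k => RtoC (INR k - 1) * a k)%C (fun w => w * fp w - f w)%C);
    [exact is_series_zfp_sub_f|].
  intros w Hw. rewrite heq by exact Hw.
  rewrite !Cmod_mult, Cmod_pow, Cmod_R, Rabs_pos_eq by lra.
  assert (H1 := hphi w Hw). assert (H2 := Cmod_ge_0 (phi w)). assert (H3 := Cmod_ge_0 w).
  assert (Cmod w ^ 2 <= 1) by nra. nra.
Qed.

Lemma Cmod_coef_le_inv (k : nat) : (2 <= k)%nat -> Cmod (a k) <= / (2 * (INR k - 1)).
Proof.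
  intros Hk. assert (Hk1 : 1 <= INR k - 1) by (apply le_INR in Hk; simpl in Hk; lra).
  assert (H := Cmod_pred_mul_coef_le k). rewrite Cmod_mult, Cmod_R, Rabs_pos_eq in H by lra.
  apply (Rmult_le_reg_l (INR k - 1)); [lra|].
  replace ((INR k - 1) * / (2 * (INR k - 1))) with (/ 2) by (field; lra). exact H.
Qed.

Lemma Cmod_coef_le_1 (k : nat) : Cmod (a k) <= 1.
Proof.
  destruct k as [|[|k]].
  - rewrite ha0, Cmod_0. lra.
  - rewrite ha1, Cmod_1. lra.
  - eapply Rle_trans; [apply Cmod_coef_le_inv; lia|].
    assert (1 <= INR (S (S k)) - 1) by (rewrite !S_INR; assert (0 <= INR k) by apply pos_INR; lra).
    rewrite <- Rinv_1. apply Rinv_le_contravar; lra.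
Qed.

Lemma Cmod_succ_mul_coef_le (k : nat) : Cmod (INR (S k) * a (S (S k)))%C <= / 2.
Proof.
  replace (INR (S k)) with (INR (S (S k)) - 1) by (rewrite (S_INR (S k)); ring).
  apply Cmod_pred_mul_coef_le.
Qed.

(* Off [w = 0] this series sums to [phi w / 2]; at [w = 0] it sums to [a_2]. *)
Lemma Cmod_half_phi_series_le (w Dw : C) :
  Cmod w < 1 -> is_series (fun k => w ^ k * (INR (S k) * a (S (S k))))%C Dw -> Cmod Dw <= / 2.
Proof.
  intros Hw HDw. destruct (Ceq_dec w 0) as [->|Hw0].
  - replace Dw with (INR 1 * a 2%nat)%C; [apply Cmod_succ_mul_coef_le|].
    apply (is_series_C_unique _ _ _ (proj1 (is_pseries_C _ _ _) (is_pseries_0 _)) HDw).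
  - assert (HP : is_series (fun k => w ^ (2 + k) * (RtoC (INR (2 + k) - 1) * a (2 + k)%nat))%C
                   (w * fp w - f w)%C).
    { apply (is_series_C_drop_zeros 2 (fun k => w ^ k * (RtoC (INR k - 1) * a k))%C);
        [|exact (is_series_zfp_sub_f w Hw)].
      intros k Hk. destruct k as [|[|k]]; [rewrite ha0 | rewrite ha1 | lia]; simpl;
        [ring | replace (1 - 1) with 0 by ring; ring]. }
    assert (E : (w ^ 2 * Dw)%C = (w * fp w - f w)%C).
    { refine (is_series_C_unique _ _ _ _ HP).
      refine (is_series_C_ext _ _ _ _
                (is_series_scal_l (V := C_NormedModule) (w ^ 2)%C _ _ HDw)).
      intros k. change scal with Cmult.
      replace (INR (2 + k) - 1) with (INR (S k)) by (rewrite plus_INR, S_INR; simpl; ring).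
      rewrite Cpow_add_r. change (2 + k)%nat with (S (S k)). ring. }
    rewrite heq in E by exact Hw.
    replace Dw with (RtoC (/ 2) * phi w)%C.
    + rewrite Cmod_mult, Cmod_R, Rabs_pos_eq by lra.
      assert (H := hphi w Hw). lra.
    + replace Dw with (/ (w ^ 2) * (w ^ 2 * Dw))%C by (field; exact Hw0).
      rewrite E. field. exact Hw0.
Qed.

(* [f'(z) = f(z)/z + z (phi z)/2], where [f(z)/z = sum_k a_(k+1) z^k] has derivative
   [phi/2]; both pieces are at most [|z|/2] in modulus. *)
Lemma Cmod_fp_sub_1_le (z : C) : Cmod z < 1 -> Cmod (fp z - 1)%C <= Cmod z.
Proof.
  intros Hz.
  assert (HD : forall w, Cmod w < 1 -> exists Dw,
            is_series (fun k => w ^ k * (INR (S k) * a (S (S k))))%C Dw /\ Cmod Dw <= / 2).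
  { intros w Hw.
    destruct (ex_series_C_bounded_coef _ (/ 2) w Cmod_succ_mul_coef_le Hw) as [Dw HDw].
    exists Dw. split; [exact HDw | exact (Cmod_half_phi_series_le w Dw Hw HDw)]. }
  assert (Hc := fun k => Cmod_coef_le_1 (S k)).
  destruct (ex_series_C_bounded_coef (fun k => a (S k)) 1 z Hc Hz) as [Q HQ].
  assert (HQ1 := Cmod_pseries_sub_coef0_le _ 1 (/ 2) z Q Hc HD Hz HQ).
  cbv beta in HQ1. rewrite ha1 in HQ1.
  destruct (HD z Hz) as [Dz [HDz HDz2]].
  assert (Hsplit : fp z = (Q + z * Dz)%C).
  { apply (is_series_C_unique _ _ _ (is_series_fp z Hz)).
    assert (HzD : is_series (fun k => z ^ k * (INR k * a (S k)))%C (z * Dz)%C).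
    { apply is_series_C_unshift; [simpl; ring|].
      refine (is_series_C_ext _ _ _ _ (is_series_scal_l (V := C_NormedModule) z _ _ HDz)).
      intros k. change scal with Cmult. simpl. ring. }
    refine (is_series_C_ext _ _ _ _ (is_series_plus _ _ _ _ HQ HzD)).
    intros k. change plus with Cplus. rewrite S_INR, RtoC_plus. ring. }
  rewrite Hsplit. replace (Q + z * Dz - 1)%C with ((Q - 1) + z * Dz)%C by ring.
  eapply Rle_trans; [apply Cmod_triangle|]. rewrite Cmod_mult.
  assert (Hz0 := Cmod_ge_0 z).
  assert (Cmod z * Cmod Dz <= Cmod z * / 2) by (apply Rmult_le_compat_l; assumption).
  lra.
Qed.

Lemma Cmod_fp_ge (z : C) : Cmod z < 1 -> 1 - Cmod z <= Cmod (fp z).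
Proof.
  intros Hz. assert (H := Cmod_fp_sub_1_le z Hz).
  assert (T := Cmod_triangle (fp z) (1 - fp z)%C).
  replace (fp z + (1 - fp z))%C with (RtoC 1) in T by ring.
  replace (1 - fp z)%C with (- (fp z - 1))%C in T by ring.
  rewrite Cmod_1, Cmod_opp in T. lra.
Qed.

Lemma Cmod_fp_sub_sn_deriv_le (n : nat) (z : C) :
  (1 <= n)%nat -> Cmod z < 1 ->
  Cmod (fp z - sn_deriv a n z)%C <= (INR n + 1) / (2 * INR n) * Cmod z ^ n / (1 - Cmod z).
Proof.
  intros Hn Hz. assert (Hz0 := Cmod_ge_0 z).
  assert (Hn1 : 1 <= INR n) by (apply le_INR in Hn; exact Hn).
  set (K := (INR n + 1) / (2 * INR n)).
  assert (Htail : is_series (fun k => z ^ (n + k) * (INR (S (n + k)) * a (S (n + k))))%C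
                    (fp z - sn_deriv a n z)%C).
  { apply (is_series_incr_n (fun k => z ^ k * (INR (S k) * a (S k)))%C); [lia|].
    rewrite sum_n_sn_deriv, Nat.succ_pred_pos by lia. change plus with Cplus.
    replace (fp z - sn_deriv a n z + sn_deriv a n z)%C with (fp z) by ring.
    exact (is_series_fp z Hz). }
  apply (Cmod_series_le _ (fun k => K * Cmod z ^ n * Cmod z ^ k) _ _ Htail).
  - apply (is_series_scal_l (V := R_NormedModule) (K * Cmod z ^ n)), is_series_geom.
    rewrite Rabs_pos_eq; lra.
  - intros k.
    rewrite !Cmod_mult, Cmod_pow, Cmod_R, Rabs_pos_eq, pow_add by apply pos_INR.
    assert (HnkK : INR (S (n + k)) * Cmod (a (S (n + k))) <= K).
    { assert (Hnk : INR n <= INR (n + k)) by (apply le_INR; lia).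
      apply (Rle_trans _ (INR (S (n + k)) * / (2 * (INR (S (n + k)) - 1)))).
      - apply Rmult_le_compat_l; [apply pos_INR | apply Cmod_coef_le_inv; lia].
      - rewrite S_INR. unfold K.
        replace (INR (n + k) + 1 - 1) with (INR (n + k)) by ring.
        apply (Rmult_le_reg_r (2 * INR (n + k) * (2 * INR n))); [nra|].
        field_simplify; nra. }
    assert (0 <= Cmod z ^ n * Cmod z ^ k) by (apply Rmult_le_pos; apply pow_le; lra).
    replace (K * Cmod z ^ n * Cmod z ^ k) with (Cmod z ^ n * Cmod z ^ k * K) by ring.
    apply Rmult_le_compat_l; assumption.
Qed.

End FunctionClass.

(** * The constant [B_n] *)

Lemma ln_1_plus_le (x : R) : 0 <= x -> ln (1 + x) <= x.
Proof.
  intros Hx. rewrite <- (ln_exp x) at 2. apply ln_le; [lra | apply exp_ineq1_le].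
Qed.

Lemma ln_le_harmonic (m : nat) : ln (INR (S (S m))) <= harmonic (S m).
Proof.
  unfold harmonic. simpl pred. induction m as [|m IH].
  - simpl. rewrite Rinv_1. now apply ln_1_plus_le; lra.
  - rewrite tech5.
    assert (HP : 0 < INR (S (S m))) by (apply lt_0_INR; lia).
    replace (INR (S (S (S m)))) with (INR (S (S m)) * (1 + / INR (S (S m))))
      by (rewrite (S_INR (S (S m))); field; lra).
    assert (Hinv : 0 < / INR (S (S m))) by (apply Rinv_0_lt_compat; lra).
    rewrite ln_mult by lra.
    assert (H := ln_1_plus_le (/ INR (S (S m))) ltac:(lra)). lra.
Qed.

Lemma euler_gamma_nonneg : 0 <= euler_gamma.
Proof.
  unfold euler_gamma.
  assert (H : Rbar_le (Lim_seq (fun _ => 0)) (Lim_seq (fun n => harmonic n - ln (INR n)))).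
  { apply Lim_seq_le_loc. exists 1%nat. intros [|m] Hm; [lia|].
    assert (H1 := ln_le_harmonic m).
    assert (ln (INR (S m)) <= ln (INR (S (S m))))
      by (apply ln_le; [apply lt_0_INR; lia | apply le_INR; lia]).
    lra. }
  rewrite Lim_seq_const in H.
  destruct (Lim_seq _) as [l| |]; simpl in *; lra.
Qed.

Lemma B_const_ge (r : R) (n : nat) :
  0 < r < 1 -> (2 <= n)%nat -> (INR n + 1) / (2 * (1 - r)) <= B_const r n.
Proof.
  intros Hr Hn. assert (Hn2 : 2 <= INR n) by (apply le_INR in Hn; exact Hn).
  assert (Hrn : 0 < r ^ n <= r).
  { split; [apply pow_lt; lra|]. destruct n as [|n]; [lia|]. simpl.
    assert (r ^ n <= 1) by (rewrite <- (pow1 n); apply pow_incr; lra). nra. }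
  assert (Hsqrt : r <= sqrt (2 * r - r ^ 2)).
  { rewrite <- (sqrt_pow2 r) at 1 by lra. apply sqrt_le_1_alt. nra. }
  assert (Hratio : 1 <= sqrt (2 * r - r ^ 2) / r ^ n) by (apply Rle_div_r; lra).
  assert (Hln : 0 <= ln (INR n - 1)) by (rewrite <- ln_1; apply ln_le; lra).
  assert (Hg := euler_gamma_nonneg).
  unfold B_const.
  replace (sqrt (2 * r - r ^ 2) / (2 * (1 - r) * r ^ n) * (INR n + 1 + ln (INR n - 1) + euler_gamma))
    with (sqrt (2 * r - r ^ 2) / r ^ n
          * ((INR n + 1 + ln (INR n - 1) + euler_gamma) / (2 * (1 - r)))) by (field; lra).
  assert (HB0 : 0 < (INR n + 1) / (2 * (1 - r))) by (apply Rdiv_lt_0_compat; lra).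
  assert ((INR n + 1) / (2 * (1 - r))
          <= (INR n + 1 + ln (INR n - 1) + euler_gamma) / (2 * (1 - r))).
  { apply Rmult_le_compat_r; [apply Rlt_le, Rinv_0_lt_compat; lra | lra]. }
  nra.
Qed.

Lemma geometric_ratio_le (r w : R) (n : nat) :
  0 <= w < r -> r < 1 -> (2 <= n)%nat ->
  (INR n + 1) / (2 * INR n) / (1 - w) ^ 2
  <= (INR n + 1) / (2 * INR n) + (INR n + 1) / (2 * (1 - r)) * (w / (r - w)).
Proof.
  intros Hw Hr Hn. assert (Hn2 : 2 <= INR n) by (apply le_INR in Hn; exact Hn).
  set (K := (INR n + 1) / (2 * INR n)).
  assert (HK : 0 < K <= (INR n + 1) / 4).
  { unfold K. split; [apply Rdiv_lt_0_compat; lra|].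
    apply Rmult_le_compat_l; [lra | apply Rinv_le_contravar; lra]. }
  assert (Hpoly : (2 - w) * (r - w) * (1 - r) <= 2 * (1 - w) ^ 2).
  { assert (0 <= (r - w - (1 - r)) ^ 2) by apply pow2_ge_0.
    assert (Hamgm : (r - w) * (1 - r) <= (1 - w) ^ 2 / 4) by nra.
    assert (0 <= (r - w) * (1 - r)) by nra. nra. }
  replace (K / (1 - w) ^ 2) with (K + w * (K * (2 - w) / (1 - w) ^ 2)) by (field; lra).
  apply Rplus_le_compat_l.
  replace ((INR n + 1) / (2 * (1 - r)) * (w / (r - w)))
    with (w * ((INR n + 1) / (2 * (1 - r)) / (r - w))) by (field; lra).
  apply Rmult_le_compat_l; [lra|].
  apply (Rmult_le_reg_r ((1 - w) ^ 2 * (r - w) * (1 - r)));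
    [apply Rmult_lt_0_compat; [apply Rmult_lt_0_compat; [apply pow_lt|]|]; lra|].
  replace (K * (2 - w) / (1 - w) ^ 2 * ((1 - w) ^ 2 * (r - w) * (1 - r)))
    with (K * ((2 - w) * (r - w) * (1 - r))) by (field; lra).
  replace ((INR n + 1) / (2 * (1 - r)) / (r - w) * ((1 - w) ^ 2 * (r - w) * (1 - r)))
    with ((INR n + 1) / 4 * (2 * (1 - w) ^ 2)) by (field; lra).
  apply Rmult_le_compat; [lra | | lra | exact Hpoly].
  apply Rmult_le_pos; [apply Rmult_le_pos|]; lra.
Qed.

Theorem theorem3p2
  (a : nat -> C) (f fp phi : C -> C)
  (ha0 : a 0%nat = RtoC 0) (ha1 : a 1%nat = RtoC 1)
  (hf : forall z : C, Cmod z < 1 -> is_pseries a z (f z))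
  (hfp : forall z : C, Cmod z < 1 -> is_derive f z (fp z))
  (hphi_an : forall z : C, Cmod z < 1 -> ex_derive phi z)
  (hphi_bd : forall z : C, Cmod z < 1 -> Cmod (phi z) <= 1)
  (heq : forall z : C, Cmod z < 1 ->
     Cminus (Cmult z (fp z)) (f z)
     = Cmult (RtoC (/ 2)) (Cmult (Cpow z 2) (phi z)))
  (r : R) (hr : 0 < r < 1) (n : nat) (hn : (2 <= n)%nat)
  (z : C) (hz : Cmod z < r) :
  Cmod (Cminus (Cdiv (sn_deriv a n z) (fp z)) (RtoC 1))
  <= Cmod z ^ n * ((INR n + 1) / (2 * INR n)
                   + B_const r n * (Cmod z / (r - Cmod z))).
Proof.
  assert (hf' : forall w, Cmod w < 1 -> is_series (fun k => w ^ k * a k)%C (f w))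
    by (intros w Hw; now apply is_pseries_C, hf).
  assert (hz1 : Cmod z < 1) by lra. assert (Hz0 := Cmod_ge_0 z).
  assert (Hn2 : 2 <= INR n) by (apply le_INR in hn; exact hn).
  assert (Htail := Cmod_fp_sub_sn_deriv_le a f fp phi hf' hfp hphi_bd heq n z ltac:(lia) hz1).
  assert (Hfp := Cmod_fp_ge a f fp phi ha0 ha1 hf' hfp hphi_bd heq z hz1).
  assert (Hfp0 : fp z <> RtoC 0) by (intros E; rewrite E, Cmod_0 in Hfp; lra).
  replace (sn_deriv a n z / fp z - 1)%C with (- (fp z - sn_deriv a n z) / fp z)%C
    by (field; exact Hfp0).
  rewrite Cmod_div, Cmod_opp by exact Hfp0.
  apply (Rle_trans _ ((INR n + 1) / (2 * INR n) * Cmod z ^ n / (1 - Cmod z) / (1 - Cmod z))).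
  { unfold Rdiv at 1 3. apply Rmult_le_compat; [apply Cmod_ge_0 | | exact Htail |].
    - apply Rlt_le, Rinv_0_lt_compat. lra.
    - apply Rinv_le_contravar; lra. }
  replace ((INR n + 1) / (2 * INR n) * Cmod z ^ n / (1 - Cmod z) / (1 - Cmod z))
    with (Cmod z ^ n * ((INR n + 1) / (2 * INR n) / (1 - Cmod z) ^ 2)) by (field; lra).
  apply Rmult_le_compat_l; [apply pow_le; lra|].
  eapply Rle_trans; [apply (geometric_ratio_le r); [lra | lra | exact hn]|].
  apply Rplus_le_compat_l, Rmult_le_compat_r; [apply Rdiv_le_0_compat; lra|].
  now apply B_const_ge.
Qed.
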